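(* Let $M$ be a finite $\Sigma$-Rickart right $R$-module and $S=\mathrm{End}_R(M)$. Then (i) $S$ is a right semi-hereditary ring; (ii) $S$ is a right coherent ring; (iii) every finitely $M$-generated submodule of $M$ is $M$-coherent.
   Context: $M^{(n)}$ is the direct sum of $n$ copies of $M$. $M$ is Rickart if $\ker\varphi$ is a direct summand of $M$ for all $\varphi\in\mathrm{End}_R(M)$; $M$ is finite $\Sigma$-Rickart if $M^{(n)}$ is Rickart for all $n>0$. A ring is right semi-hereditary if every finitely generated right ideal is projective, and right coherent if every finitely generated right ideal is finitely presented. A module $N$ is finitely $M$-generated if there is an epimorphism $M^{(n)}\to N$ for some $n>0$; such an $N$ is $M$-coherent if for every $n>0$ and every homomorphism $\rho:M^{(n)}\to N$, $\ker\rho$ is finitely $M$-generated. *)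

From HB Require Import structures.
From mathcomp Require Import all_boot all_order all_algebra.
From mathcomp Require Import boolp.
Set Implicit Arguments.
Unset Strict Implicit.
Unset Printing Implicit Defensive.
Import GRing.Theory.
Local Open Scope ring_scope.

(* A right R-module is modelled as a left module over the ring R       *)
(* (equivalently a left R^op-module).                    *)

Definition is_hom (R : pzRingType) (U V : lmodType R) (f : U -> V) : Prop :=
  (forall x y, f (x + y) = f x + f y) /\ (forall (a : R) x, f (a *: x) = a *: f x).

Definition is_submodule (R : pzRingType) (X : lmodType R) (N : X -> Prop) : Prop :=
  [/\ N 0, (forall x y, N x -> N y -> N (x + y)) & (forall (a : R) x, N x -> N (a *: x))].

Definition is_direct_summand (R : pzRingType) (X : lmodType R) (N : X -> Prop) : Prop :=
  exists C : X -> Prop, [/\ is_submodule C,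
    (forall x, N x -> C x -> x = 0) &
    (forall x, exists k c, [/\ N k, C c & x = k + c])].

Notation dsum M n := {ffun 'I_n -> M}.

Definition rickart (R : pzRingType) (M : lmodType R) : Prop :=
  forall phi : M -> M, is_hom phi -> is_direct_summand (fun x => phi x = 0).

Definition fin_sigma_rickart (R : pzRingType) (M : lmodType R) : Prop :=
  forall n : nat, (0 < n)%N -> rickart (dsum M n).

Definition fin_M_generated (R : pzRingType) (M X : lmodType R) (N : X -> Prop) : Prop :=
  exists n : nat, (0 < n)%N /\
    exists rho : dsum M n -> X,
      [/\ is_hom rho, (forall v, N (rho v)) & (forall x, N x -> exists v, rho v = x)].

Definition M_coherent (R : pzRingType) (M X : lmodType R) (N : X -> Prop) : Prop :=
  fin_M_generated M N /\
  forall n : nat, (0 < n)%N -> forall rho : dsum M n -> X,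
    is_hom rho -> (forall v, N (rho v)) ->
    fin_M_generated M (fun v : dsum M n => rho v = 0).

(* (f * g) x = f (g x), i.e. endomorphisms act on the left of M.       *)
Section EndRing.
Variables (R : pzRingType) (M : lmodType R).

Record endo := Endo { efun :> M -> M; efunP : is_hom efun }.

HB.instance Definition _ := gen_eqMixin endo.
HB.instance Definition _ := gen_choiceMixin endo.

Lemma endo_ext (f g : endo) : (forall x, f x = g x) -> f = g.
Proof.
case: f g => f fP [g gP] /= efg.
have E : f = g by apply: funext.
subst g; congr Endo; exact: Prop_irrelevance.
Qed.

Fact zero_hom : is_hom (fun _ : M => (0 : M)).
Proof. by split=> *; rewrite ?addr0 ?scaler0. Qed.
Fact add_hom (f g : endo) : is_hom (fun x => f x + g x).
Proof.
case: f g => f [f1 f2] [g [g1 g2]]; split=> /= *.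
  by rewrite f1 g1 addrACA.
by rewrite f2 g2 scalerDr.
Qed.
Fact opp_hom (f : endo) : is_hom (fun x => - f x).
Proof. case: f => f [f1 f2]; split=> /= *; by rewrite ?f1 ?f2 ?opprD ?scalerN. Qed.
Fact one_hom : is_hom (fun x : M => x).
Proof. by []. Qed.
Fact mul_hom (f g : endo) : is_hom (fun x => f (g x)).
Proof. case: f g => f [f1 f2] [g [g1 g2]]; split=> /= *; by rewrite ?g1 ?f1 ?g2 ?f2. Qed.

Definition e0 := Endo zero_hom.
Definition eadd f g := Endo (add_hom f g).
Definition eopp f := Endo (opp_hom f).
Definition e1 := Endo one_hom.
Definition emul f g := Endo (mul_hom f g).

Fact eaddA : associative eadd.
Proof. by move=> f g h; apply: endo_ext => x /=; rewrite addrA. Qed.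
Fact eaddC : commutative eadd.
Proof. by move=> f g; apply: endo_ext => x /=; rewrite addrC. Qed.
Fact eadd0 : left_id e0 eadd.
Proof. by move=> f; apply: endo_ext => x /=; rewrite add0r. Qed.
Fact eaddN : left_inverse e0 eopp eadd.
Proof. by move=> f; apply: endo_ext => x /=; rewrite addNr. Qed.

HB.instance Definition _ := GRing.isZmodule.Build endo eaddA eaddC eadd0 eaddN.

Fact emulA : associative emul.
Proof. by move=> f g h; apply: endo_ext. Qed.
Fact emul1 : left_id e1 emul.
Proof. by move=> f; apply: endo_ext. Qed.
Fact emulr1 : right_id e1 emul.
Proof. by move=> f; apply: endo_ext. Qed.
Fact emulDl : left_distributive emul +%R.
Proof. by move=> f g h; apply: endo_ext. Qed.
Fact emulDr : right_distributive emul +%R.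
Proof.
move=> f g h; apply: endo_ext => x /=.
by case: f => f [f1 f2] /=; rewrite f1.
Qed.

HB.instance Definition _ := GRing.Zmodule_isPzRing.Build endo
  emulA emul1 emulr1 emulDl emulDr.

End EndRing.

Notation End_ring M := (endo M).

(* Right S-modules are left modules over the converse ring S^c.        *)

Definition is_right_ideal (S : pzRingType) (I : S -> Prop) : Prop :=
  [/\ I 0, (forall x y, I x -> I y -> I (x + y)), (forall x, I x -> I (- x))
    & (forall x s, I x -> I (x * s))].

Definition generates_right_ideal (S : pzRingType) (I : S -> Prop) n (g : 'I_n -> S) : Prop :=
  (forall i, I (g i)) /\
  (forall x, I x -> exists s : 'I_n -> S, x = \sum_(i < n) g i * s i).

Definition fg_right_ideal (S : pzRingType) (I : S -> Prop) : Prop :=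
  exists n (g : 'I_n -> S), generates_right_ideal I g.

Definition rscale (S : pzRingType) (B : lmodType S^c) (b : B) (s : S) : B :=
  @GRing.scale S^c B s b.

(* g : I -> B (given as a function on S, only its values on I matter)
   is a homomorphism of right S-modules *)
Definition is_hom_on_ideal (S : pzRingType) (I : S -> Prop) (B : lmodType S^c)
    (g : S -> B) : Prop :=
  (forall x y, I x -> I y -> g (x + y) = g x + g y) /\
  (forall x s, I x -> g (x * s) = rscale (g x) s).

Definition is_hom_right (S : pzRingType) (A B : lmodType S^c) (p : A -> B) : Prop :=
  (forall x y, p (x + y) = p x + p y) /\ (forall x s, p (rscale x s) = rscale (p x) s).

Definition projective_right_ideal (S : pzRingType) (I : S -> Prop) : Prop :=
  forall (A B : lmodType S^c) (p : A -> B),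
    is_hom_right p -> (forall b, exists a, p a = b) ->
    forall g : S -> B, is_hom_on_ideal I g ->
    exists h : S -> A, is_hom_on_ideal I h /\ (forall x, I x -> p (h x) = g x).

(* The right ideal I is finitely presented: there is an exact sequence
   S^m -> S^n -> I -> 0, i.e. I has finitely many generators g whose
   relation module {s in S^n | sum g_i s_i = 0} is finitely generated. *)
Definition fp_right_ideal (S : pzRingType) (I : S -> Prop) : Prop :=
  exists n (g : 'I_n -> S), generates_right_ideal I g /\
    exists m (k : 'I_m -> 'I_n -> S),
      (forall j, \sum_(i < n) g i * k j i = 0) /\
      (forall s : 'I_n -> S, \sum_(i < n) g i * s i = 0 ->
         exists t : 'I_m -> S, forall i, s i = \sum_(j < m) k j i * t j).

Definition right_semihereditary (S : pzRingType) : Prop :=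
  forall I : S -> Prop, is_right_ideal I -> fg_right_ideal I -> projective_right_ideal I.

Definition right_coherent (S : pzRingType) : Prop :=
  forall I : S -> Prop, is_right_ideal I -> fg_right_ideal I -> fp_right_ideal I.

From HB Require Import structures.
From mathcomp Require Import all_boot all_order all_algebra.
From mathcomp Require Import boolp.
Set Implicit Arguments.
Unset Strict Implicit.
Import GRing.Theory.
Local Open Scope ring_scope.

(* The key fact is that for
   every homomorphism psi : M^(n) -> M the kernel of psi is a direct summand
   of M^(n), hence the image of an endomorphism e of M^(n) that fixes it.

   (iii) For rho : M^(n) -> N <= M, such an e maps M^(n) onto ker rho.
   (i),(ii) For generators g_1, ..., g_n of a right ideal I of S, apply this
   to psi(v) = sum_i g_i v_i; the matrix entries E_ij of e are elements of S
   forming a "relation matrix": the columns of E are relations of g, and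
   every relation s of g satisfies s = E s.  A purely ring-theoretic section
   then shows that any right ideal whose generators admit a relation matrix
   is finitely presented (the columns of E generate the relations) and
   projective (s |-> s - E s descends to a linear section I -> S^n of the
   map S^n -> I, so the dual basis lemma applies). *)

Lemma additive0 (U V : zmodType) (f : U -> V) :
  (forall x y, f (x + y) = f x + f y) -> f 0 = 0.
Proof. by move=> fD; apply: (@addrI _ (f 0)); rewrite -fD !addr0. Qed.

Lemma hom_sum (R : pzRingType) (X Y : lmodType R) (f : X -> Y) n (F : 'I_n -> X) :
  is_hom f -> f (\sum_(i < n) F i) = \sum_(i < n) f (F i).
Proof. by case=> fD _; apply: (big_morph f fD (additive0 fD)). Qed.

Lemma submoduleB (R : pzRingType) (X : lmodType R) (K : X -> Prop) x y :
  is_submodule K -> K x -> K y -> K (x - y).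
Proof. by case=> _ KD KZ Kx Ky; rewrite -scaleN1r; apply/KD/KZ. Qed.

Lemma ker_submodule (R : pzRingType) (X Y : lmodType R) (f : X -> Y) :
  is_hom f -> is_submodule (fun x => f x = 0).
Proof.
move=> [fD fZ]; split; first exact: additive0 fD.
  by move=> x y fx fy; rewrite fD fx fy addr0.
by move=> a x fx; rewrite fZ fx scaler0.
Qed.

Lemma summand_decomp_unique (R : pzRingType) (X : lmodType R) (K C : X -> Prop)
    k c k' c' :
  is_submodule K -> is_submodule C -> (forall x, K x -> C x -> x = 0) ->
  K k -> C c -> K k' -> C c' -> k + c = k' + c' -> k = k'.
Proof.
move=> sK sC KC Kk Cc Kk' Cc' e; apply/eqP; rewrite -subr_eq0; apply/eqP.
apply: KC; first exact: submoduleB.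
have -> : k - k' = c' - c by apply/eqP; rewrite subr_eq addrAC [c' + k']addrC -e addrK.
exact: submoduleB.
Qed.

Lemma summand_retraction (R : pzRingType) (X : lmodType R) (K : X -> Prop) :
  is_submodule K -> is_direct_summand K ->
  exists e : X -> X, [/\ is_hom e, forall x, K (e x) & forall x, K x -> e x = x].
Proof.
move=> sK [C [sC KC dec]].
have [f Hf] : {f : X -> X & forall x, K (f x) /\ C (x - f x)}.
  apply: (@choice X X (fun x y => K y /\ C (x - y))) => x.
  have [k [c [Kk Cc ->]]] := dec x; exists k; split=> //.
  by rewrite addrC addKr.
have f_unique x k c : K k -> C c -> x = k + c -> f x = k.
  move=> Kk Cc ->; have [Kf Cf] := Hf (k + c).
  by apply: (summand_decomp_unique sK sC KC Kf Cf Kk Cc); rewrite subrKC.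
have [[K0 KD KZ] [C0 CD CZ]] := (sK, sC).
exists f; split=> [|x|x Kx]; first split.
- move=> x y; apply: (f_unique _ _ ((x - f x) + (y - f y))).
  + by apply: KD; [exact: (Hf x).1|exact: (Hf y).1].
  + by apply: CD; [exact: (Hf x).2|exact: (Hf y).2].
  + by rewrite addrACA !subrKC.
- move=> a x; apply: (f_unique _ _ (a *: (x - f x))).
  + by apply: KZ; exact: (Hf x).1.
  + by apply: CZ; exact: (Hf x).2.
  + by rewrite -scalerDr subrKC.
- exact: (Hf x).1.
- by apply: (f_unique _ _ 0) => //; rewrite addr0.
Qed.

Definition inj_dsum (R : pzRingType) (M : lmodType R) n (j : 'I_n) (m : M) : dsum M n :=
  [ffun k => if k == j then m else 0].

Lemma inj_dsum_hom (R : pzRingType) (M : lmodType R) n (j : 'I_n) :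
  is_hom (@inj_dsum R M n j).
Proof.
by split=> [x y|a x]; apply/ffunP => k; rewrite !ffunE; case: ifP; rewrite ?addr0 ?scaler0.
Qed.

Lemma inj_dsum_eq0 (R : pzRingType) (M : lmodType R) n (j : 'I_n) (m : M) :
  (inj_dsum j m = 0) <-> (m = 0).
Proof.
split=> [/(congr1 (fun v : dsum M n => v j))|->]; first by rewrite !ffunE eqxx.
by apply/ffunP => k; rewrite !ffunE if_same.
Qed.

Lemma dsum_decomp (R : pzRingType) (M : lmodType R) n (v : dsum M n) :
  v = \sum_(j < n) inj_dsum j (v j).
Proof.
apply/ffunP => k; rewrite sum_ffunE (bigD1 k) //= ffunE eqxx big1 ?addr0 //.
by move=> j /negbTE; rewrite ffunE eq_sym => ->.
Qed.

(* If M^(n) is Rickart, the kernel of any psi : M^(n) -> M is a direct summand: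
   it is the kernel of the endomorphism inj_0 o psi of M^(n). *)
Lemma rickart_kernel_retraction (R : pzRingType) (M : lmodType R) n
    (psi : dsum M n -> M) :
  (0 < n)%N -> rickart (dsum M n) -> is_hom psi ->
  exists e : dsum M n -> dsum M n,
    [/\ is_hom e, forall v, psi (e v) = 0 & forall v, psi v = 0 -> e v = v].
Proof.
move=> n_gt0 rick [psiD psiZ].
pose phi v := inj_dsum (Ordinal n_gt0) (psi v).
have [injD injZ] := inj_dsum_hom M (Ordinal n_gt0).
have phi_hom : is_hom phi by split=> *; rewrite /phi ?psiD ?psiZ ?injD ?injZ.
have [e [e_hom e_ker e_fix]] :=
  summand_retraction (ker_submodule phi_hom) (rick phi phi_hom).
exists e; split=> // v; first exact/inj_dsum_eq0/e_ker.
by move/(inj_dsum_eq0 (Ordinal n_gt0)); exact: e_fix.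
Qed.

Definition relation_matrix (S : pzRingType) n (g : 'I_n -> S) (E : 'I_n -> 'I_n -> S) :=
  (forall j, \sum_(i < n) g i * E i j = 0) /\
  (forall s : 'I_n -> S, \sum_(i < n) g i * s i = 0 ->
     forall i, s i = \sum_(j < n) E i j * s j).

Lemma endo_sumE (R : pzRingType) (M : lmodType R) n (F : 'I_n -> End_ring M) m :
  (\sum_(i < n) F i) m = \sum_(i < n) F i m.
Proof. exact: (big_morph (fun f : End_ring M => f m)). Qed.

(* Over End_R(M) with M^(n) Rickart, every n generators admit a relation
   matrix: the matrix of the retraction of M^(n) onto ker (sum_i g_i). *)
Lemma rickart_relation_matrix (R : pzRingType) (M : lmodType R) n
    (g : 'I_n -> End_ring M) :
  (0 < n)%N -> rickart (dsum M n) -> exists E, relation_matrix g E.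
Proof.
move=> n_gt0 rick.
pose psi (v : dsum M n) : M := \sum_(i < n) g i (v i).
have psi_hom : is_hom psi.
  split=> [x y|a x]; rewrite /psi; last rewrite scaler_sumr.
    by rewrite -big_split; apply: eq_bigr => i _; rewrite ffunE (efunP _).1.
  by apply: eq_bigr => i _; rewrite ffunE (efunP _).2.
have [e [e_hom e_ker e_fix]] := rickart_kernel_retraction n_gt0 rick psi_hom.
have entry_hom i j : is_hom (fun m => e (inj_dsum j m) i).
  have [injD injZ] := inj_dsum_hom M j.
  by split=> *; rewrite ?injD ?injZ ?e_hom.1 ?e_hom.2 ffunE.
exists (fun i j => Endo (entry_hom i j)); split=> [j|s rel_s i].
  by apply: endo_ext => m; rewrite endo_sumE; exact: (e_ker (inj_dsum j m)).
apply: endo_ext => m; rewrite endo_sumE /=.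
pose w : dsum M n := [ffun i => s i m].
have w_ker : psi w = 0.
  have := congr1 (fun f : End_ring M => f m) rel_s; rewrite endo_sumE /= => <-.
  by apply: eq_bigr => k _; rewrite ffunE.
have := congr1 (fun v : dsum M n => v i) (e_fix _ w_ker).
rewrite ffunE => <-; rewrite {1}(dsum_decomp w) hom_sum // sum_ffunE.
by apply: eq_bigr => j _; rewrite ffunE.
Qed.

Lemma fg_right_ideal_pos (S : pzRingType) (I : S -> Prop) :
  is_right_ideal I -> fg_right_ideal I ->
  exists n (g : 'I_n -> S), (0 < n)%N /\ generates_right_ideal I g.
Proof.
move=> [I0 _ _ _] [[|n] [g gen]]; last by exists n.+1, g.
exists 1%N, (fun _ => 0); split=> //; split=> // x /gen.2 [s ->].
by exists (fun _ => 0); rewrite !big_ord0 big_ord1 mulr0.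
Qed.

(* A right ideal with generators admitting a relation matrix is finitely
   presented: the columns of E generate the module of relations. *)
Lemma relation_matrix_fp (S : pzRingType) (I : S -> Prop) n (g : 'I_n -> S) E :
  generates_right_ideal I g -> relation_matrix g E -> fp_right_ideal I.
Proof.
move=> gen [E_rel E_fix]; exists n, g; split=> //.
by exists n, (fun j i => E i j); split=> // s rel_s; exists s; exact: E_fix.
Qed.

Lemma ideal_hom_sum (S : pzRingType) (I : S -> Prop) (B : lmodType S^c) (f : S -> B) n
    (F : 'I_n -> S) :
  is_right_ideal I -> is_hom_on_ideal I f -> (forall j, I (F j)) ->
  I (\sum_(j < n) F j) /\ f (\sum_(j < n) F j) = \sum_(j < n) f (F j).
Proof.
move=> [I0 ID _ _] [fD _] IF.
have f0 : f 0 = 0 by apply: (@addrI _ (f 0)); rewrite -fD ?addr0.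
elim/big_rec2: _ => [//|j y1 y2 _ [Iy <-]].
by split; [exact: ID | rewrite fD].
Qed.

Lemma dual_basis_projective (S : pzRingType) (I : S -> Prop) n (g : 'I_n -> S)
    (sigma : S -> 'I_n -> S) :
  is_right_ideal I -> (forall i, I (g i)) ->
  (forall x y j, I x -> I y -> sigma (x + y) j = sigma x j + sigma y j) ->
  (forall x r j, I x -> sigma (x * r) j = sigma x j * r) ->
  (forall x, I x -> x = \sum_(j < n) g j * sigma x j) ->
  projective_right_ideal I.
Proof.
move=> rI gI sigmaD sigmaZ sigmaK A B p [pD pZ] p_onto f f_hom.
have [a Ha] : {a : 'I_n -> A & forall j, p (a j) = f (g j)}.
  by apply: (@choice _ _ (fun j a => p a = f (g j))) => j; exact: p_onto.
have [_ ID _ IM] := rI.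
exists (fun x => \sum_(j < n) rscale (a j) (sigma x j)); split; first split.
- move=> x y Ix Iy; rewrite -big_split; apply: eq_bigr => j _.
  by rewrite sigmaD // /rscale scalerDl.
- move=> x r Ix; rewrite /rscale scaler_sumr; apply: eq_bigr => j _.
  by rewrite sigmaZ // scalerA.
- move=> x Ix; rewrite (big_morph p pD (additive0 pD)).
  rewrite (eq_bigr (fun j => f (g j * sigma x j))); last first.
    by move=> j _; rewrite pZ Ha f_hom.2.
  by rewrite -(ideal_hom_sum rI f_hom (fun j => IM _ _ (gI j))).2 -sigmaK.
Qed.

(* The section built from a relation matrix: the coordinates s - E s of a
   representation s of x depend only on x and still represent x. *)
Section RelationMatrixSection.
Variables (S : pzRingType) (n : nat) (g : 'I_n -> S) (E : 'I_n -> 'I_n -> S).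
Hypothesis E_rel : relation_matrix g E.

Definition reduce (s : 'I_n -> S) (j : 'I_n) : S := s j - \sum_(i < n) E j i * s i.

Lemma reduce_congr s s' :
  \sum_(i < n) g i * s i = \sum_(i < n) g i * s' i -> reduce s = reduce s'.
Proof.
move=> eq_ss'; apply: funext => j; rewrite /reduce.
have rel : \sum_(i < n) g i * (s i - s' i) = 0.
  by rewrite (eq_bigr _ (fun i _ => mulrBr _ _ _)) sumrB eq_ss' subrr.
have := E_rel.2 _ rel j; rewrite (eq_bigr _ (fun i _ => mulrBr _ _ _)) sumrB => eq_j.
by rewrite -[s j](subrK (s' j)) eq_j [_ + s' j]addrC -addrA addrAC subrr add0r.
Qed.

Lemma reduce_repr s : \sum_(j < n) g j * reduce s j = \sum_(j < n) g j * s j.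
Proof.
have E_s_rel : \sum_(j < n) g j * \sum_(i < n) E j i * s i = 0.
  rewrite (eq_bigr _ (fun j _ => mulr_sumr _ _ _ _)) exchange_big big1 // => i _.
  by rewrite (eq_bigr _ (fun j _ => mulrA _ _ _)) -mulr_suml E_rel.1 mul0r.
by rewrite (eq_bigr _ (fun j _ => mulrBr _ _ _)) sumrB E_s_rel subr0.
Qed.

Lemma reduceD s s' j : reduce (fun i => s i + s' i) j = reduce s j + reduce s' j.
Proof.
by rewrite /reduce (eq_bigr _ (fun i _ => mulrDr _ _ _)) big_split /= opprD addrACA.
Qed.

Lemma reduceM s r j : reduce (fun i => s i * r) j = reduce s j * r.
Proof.
by rewrite /reduce mulrBl mulr_suml; congr (_ - _); apply: eq_bigr => i _; rewrite mulrA.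
Qed.

End RelationMatrixSection.

Lemma relation_matrix_projective (S : pzRingType) (I : S -> Prop) n (g : 'I_n -> S) E :
  is_right_ideal I -> generates_right_ideal I g -> relation_matrix g E ->
  projective_right_ideal I.
Proof.
move=> rI [gI gen] E_rel; have [_ ID _ IM] := rI.
have [rep rep_ok] : {rep : S -> 'I_n -> S &
    forall x, I x -> x = \sum_(i < n) g i * rep x i}.
  apply: (@choice _ _ (fun x s => I x -> x = \sum_(i < n) g i * s i)) => x.
  case: (pselect (I x)) => [/gen [s ->]|nIx]; first by exists s.
  by exists (fun _ => 0).
apply: (dual_basis_projective (sigma := fun x => reduce E (rep x))) => //.
- move=> x y j Ix Iy.
  rewrite -reduceD (reduce_congr E_rel (s' := fun i => rep x i + rep y i)) //.
  rewrite -rep_ok; last exact: ID.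
  by rewrite (eq_bigr _ (fun i _ => mulrDr _ _ _)) big_split -!rep_ok.
- move=> x r j Ix.
  rewrite -reduceM (reduce_congr E_rel (s' := fun i => rep x i * r)) //.
  rewrite -rep_ok; last exact: IM.
  by rewrite {1}(rep_ok x Ix) mulr_suml; apply: eq_bigr => i _; rewrite mulrA.
- by move=> x Ix; rewrite reduce_repr // -rep_ok.
Qed.

Theorem mainTheorem15 (R : pzRingType) (M : lmodType R) :
  fin_sigma_rickart M ->
  [/\ right_semihereditary (End_ring M),
      right_coherent (End_ring M)
    & forall N : M -> Prop, is_submodule N -> fin_M_generated M N -> M_coherent M N].
Proof.
move=> fsr; split.
- move=> I rI /(fg_right_ideal_pos rI) [n [g [n_gt0 gen]]].
  have [E E_rel] := rickart_relation_matrix g n_gt0 (fsr n n_gt0).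
  exact: relation_matrix_projective E_rel.
- move=> I rI /(fg_right_ideal_pos rI) [n [g [n_gt0 gen]]].
  have [E E_rel] := rickart_relation_matrix g n_gt0 (fsr n n_gt0).
  exact: relation_matrix_fp E_rel.
- move=> N _ N_fg; split=> // n n_gt0 rho rho_hom _.
  have [e [e_hom e_ker e_fix]] := rickart_kernel_retraction n_gt0 (fsr n n_gt0) rho_hom.
  by exists n; split=> //; exists e; split=> // v /e_fix <-; exists v.
Qed.
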